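(* Let $\Delta\geq1$ be an integer and $\gamma,\eta$ reals with $0<\gamma\leq1/2$ and $\Delta^{-1/2}\leq\eta\leq\gamma^2/8$. Let $G$ be a finite graph with $d_G(v)\in\{\Delta-1,\Delta\}$ for all vertices $v$ and $\Delta_2(G)\leq\eta\Delta$. Let $A\subseteq V(G)$ be a $p$-random set with $p=\gamma/\Delta$ and let $G'=G\setminus(A\cup N_G(A))$. Then for all vertices $u,v$ of $G$, \[ \mathbb{E}\big(d_{G'}(v)\,\big|\,v\in G'\big)\leq(1-\gamma+\gamma^2)d_G(v), \] and (for $u\neq v$) \[ \mathbb{E}\big(d_{G'}(u,v)\,\big|\,u,v\in G'\big)\leq(1-\gamma+\gamma^2)d_G(u,v). \]
   Context: A $p$-random subset includes each element independently with probability $p$. $N_G(v)$ is the neighbourhood of $v$, $N_G(U)=\bigcup_{u\in U}N_G(u)$, $d_G(v)=|N_G(v)|$, $d_G(u,v)=|N_G(u)\cap N_G(v)|$, $\Delta_2(G)=\max_{u\neq v}d_G(u,v)$. $G\setminus S$ is the induced subgraph on $V(G)\setminus S$. *)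

(* Finite simple graph = symmetric irreflexive rel on a finType. *)
From HB Require Import structures.
From mathcomp Require Import all_boot all_order all_algebra.
Set Implicit Arguments. Unset Strict Implicit. Unset Printing Implicit Defensive.
Import Order.TTheory GRing.Theory Num.Theory.
Local Open Scope ring_scope.

Section Defs.
Variable T : finType.

Definition nbhd (e : rel T) (v : T) : {set T} := [set w | e v w].
Definition nbhdS (e : rel T) (U : {set T}) : {set T} := \bigcup_(u in U) nbhd e u.
Definition remaining (e : rel T) (A : {set T}) : {set T} := ~: (A :|: nbhdS e A).
Definition deg_after (e : rel T) (A : {set T}) (v : T) : nat :=
  #|nbhd e v :&: remaining e A|.
Definition codeg_after (e : rel T) (A : {set T}) (u v : T) : nat :=
  #|nbhd e u :&: nbhd e v :&: remaining e A|.

Definition prand {R : numDomainType} (p : R) (A : {set T}) : R :=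
  p ^+ #|A| * (1 - p) ^+ #|~: A|.

Definition cond_exp {R : numFieldType} (p : R) (ev : pred {set T})
  (X : {set T} -> R) : R :=
  (\sum_(A : {set T} | ev A) prand p A * X A) / (\sum_(A : {set T} | ev A) prand p A).
End Defs.

From HB Require Import structures.
From mathcomp Require Import all_boot all_order all_algebra.
From mathcomp Require Import zify ring lra.
Set Implicit Arguments. Unset Strict Implicit. Unset Printing Implicit Defensive.
Import Order.TTheory GRing.Theory Num.Theory.
Local Open Scope ring_scope.

(* Conditioning on [v \in G'] (resp. [u, v \in G']) is conditioning on [A]
   avoiding the closed neighbourhood [S] of [v] (resp. of [u] and [v]); since
   the events [x \notin A] are independent, a neighbour [w] then survives with
   probability exactly [(1 - p) ^ |N[w] \ S|].  The degree and codegree bounds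
   give [|N[w] \ S| >= Delta - 3 - 2 eta Delta >= Delta (1 - gamma / 2)], and
   the quadratic Bonferroni bound [(1 - p)^m <= 1 - m p + (m p)^2 / 2] with
   [m p] in [[gamma - gamma^2 / 2, gamma]] yields [1 - gamma + gamma^2]. *)

Lemma sum_set_prod (R : comNzRingType) (T : finType) (h : T -> bool -> R) :
  \sum_(A : {set T}) \prod_(x : T) h x (x \in A) = \prod_(x : T) (h x true + h x false).
Proof.
rewrite (eq_bigr (fun x => \sum_(b : bool) h x b)); last by move=> x _; rewrite big_bool.
rewrite bigA_distr_bigA /= (reindex (fun A : {set T} => [ffun x => x \in A])) /=.
  by apply: eq_bigr => A _; apply: eq_bigr => x _; rewrite ffunE.
exists (fun f : {ffun T -> bool} => [set x | f x]).
  by move=> A _; apply/setP => x; rewrite inE ffunE.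
by move=> f _; apply/ffunP => x; rewrite ffunE inE.
Qed.

Lemma prandE (R : numDomainType) (T : finType) (p : R) (A : {set T}) :
  prand p A = \prod_(x : T) (if x \in A then p else 1 - p).
Proof.
rewrite /prand -!prodr_const [RHS](bigID (mem A)) /=.
by congr (_ * _); apply: eq_big => x; rewrite ?inE //; case: (x \in A).
Qed.

Lemma sum_prand_avoid (R : numDomainType) (T : finType) (p : R) (S : {set T}) :
  \sum_(A : {set T} | A :&: S == set0) prand p A = (1 - p) ^+ #|S|.
Proof.
pose h x (b : bool) := if b then (if x \in S then 0 else p) else 1 - p.
transitivity (\sum_(A : {set T}) \prod_(x : T) h x (x \in A)).
  rewrite big_mkcond; apply: eq_bigr => A _; rewrite prandE.
  case: eqP => [AS | /eqP/set0Pn [y]].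
    apply: eq_bigr => x _; rewrite /h; case: ifP => // xA; case: ifP => // xS.
    by have := in_set0 x; rewrite -AS inE xA xS.
  by rewrite inE => /andP [yA yS]; rewrite (bigD1 y) //= /h yA yS mul0r.
rewrite sum_set_prod -prodr_const [RHS]big_mkcond.
by apply: eq_bigr => x _; rewrite /h; case: ifP; rewrite ?add0r // addrC subrK.
Qed.

Lemma eq_cond_exp (R : numFieldType) (T : finType) (p : R) (ev ev' : pred {set T})
    (X : {set T} -> R) :
  ev =1 ev' -> cond_exp p ev X = cond_exp p ev' X.
Proof. by move=> eq_ev; rewrite /cond_exp !(eq_bigl _ _ eq_ev). Qed.

Lemma cardsUD (T : finType) (S X : {set T}) : #|S :|: X| = (#|S| + #|X :\: S|)%N.
Proof. by rewrite cardsU -(cardsID S X) setIC; lia. Qed.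

Section Neighbourhoods.
Variables (T : finType) (e : rel T).
Hypothesis sym_e : symmetric e.

Definition cnbhd (x : T) : {set T} := x |: nbhd e x.

Lemma in_remaining (A : {set T}) (x : T) :
  (x \in remaining e A) = (A :&: cnbhd x == set0).
Proof.
rewrite /remaining in_setC in_setU negb_or; apply/andP/eqP => [[xA xNA] | AN].
  apply/setP => y; rewrite !inE; apply/negP => /andP [yA /orP [/eqP yx | exy]].
    by move: xA; rewrite -yx yA.
  by move/negP: xNA; apply; apply/bigcupP; exists y; rewrite // inE sym_e.
split; apply/negP.
  by move=> xA; have := in_set0 x; rewrite -AN !inE xA eqxx.
move=> /bigcupP [y yA]; rewrite inE => eyx.
by have := in_set0 y; rewrite -AN !inE yA sym_e eyx orbT.
Qed.

Lemma sum_prand_card_remaining (R : numDomainType) (p : R) (S W : {set T}) :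
  \sum_(A : {set T} | A :&: S == set0) prand p A * #|W :&: remaining e A|%:R
  = \sum_(w in W) (1 - p) ^+ #|S :|: cnbhd w|.
Proof.
have cardE A : #|W :&: remaining e A|%:R = \sum_(w in W) ((w \in remaining e A)%:R : R).
  rewrite -sum1_card natr_sum big_mkcond [RHS]big_mkcond /=.
  by apply: eq_bigr => w _; rewrite inE; case: (w \in W); case: (w \in remaining e A).
under eq_bigr => A _ do rewrite cardE mulr_sumr.
rewrite exchange_big; apply: eq_bigr => w _.
rewrite -sum_prand_avoid big_mkcond [RHS]big_mkcond; apply: eq_bigr => A _.
rewrite in_remaining setIUr setU_eq0.
by case: (A :&: S == set0); case: (A :&: cnbhd w == set0); rewrite ?mulr1 ?mulr0.
Qed.

Lemma cond_exp_card_remaining (R : numFieldType) (p : R) (S W : {set T}) :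
  p != 1 ->
  cond_exp p (fun A => A :&: S == set0) (fun A => #|W :&: remaining e A|%:R)
  = \sum_(w in W) (1 - p) ^+ #|cnbhd w :\: S|.
Proof.
move=> p1; have q0 : (1 - p) ^+ #|S| != 0 by rewrite expf_neq0 // subr_eq0 eq_sym.
rewrite /cond_exp sum_prand_card_remaining sum_prand_avoid.
under eq_bigr => w _ do rewrite cardsUD exprD.
by rewrite -mulr_sumr mulrC mulKf.
Qed.

Lemma card_nbhd_le (S : {set T}) (w : T) :
  (#|nbhd e w| <= #|cnbhd w :\: S| + #|nbhd e w :&: S|)%N.
Proof.
rewrite -(cardsID S (nbhd e w)) addnC leq_add2r.
by apply/subset_leq_card/setSD/subsetUr.
Qed.

Lemma card_nbhdI_cnbhd (w v : T) :
  (#|nbhd e w :&: cnbhd v| <= #|nbhd e w :&: nbhd e v| + 1)%N.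
Proof.
rewrite setIUr addnC; apply: leq_trans (leq_card_setU _ _) _.
by rewrite leq_add2r -(cards1 v) subset_leq_card // subsetIr.
Qed.

End Neighbourhoods.

Lemma expr1B_le_quadratic (R : realFieldType) (p : R) (m : nat) :
  0 <= p <= 1 -> (1 - p) ^+ m <= 1 - m%:R * p + (m%:R * p) ^+ 2 / 2.
Proof.
case/andP => p0 p1; elim: m => [|m IH].
  by rewrite expr0 mul0r expr0n mul0r subr0 addr0.
rewrite exprS; apply: le_trans (ler_wpM2l _ IH) _; first by lra.
set M : R := m%:R; have -> : (m.+1%:R : R) = M + 1 by rewrite -natr1.
have M0 : 0 <= M by exact: ler0n.
rewrite -subr_ge0.
have -> : 1 - (M + 1) * p + ((M + 1) * p) ^+ 2 / 2 - (1 - p) * (1 - M * p + (M * p) ^+ 2 / 2)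
          = (p * p + M * M * (p * p * p)) / 2 by field.
by rewrite divr_ge0 ?addr_ge0 ?mulr_ge0.
Qed.

Lemma expr1B_le_of_mul_bounds (R : realFieldType) (p gamma : R) (m : nat) :
  0 <= p <= 1 -> gamma - gamma ^+ 2 / 2 <= m%:R * p <= gamma ->
  (1 - p) ^+ m <= 1 - gamma + gamma ^+ 2.
Proof.
move=> p01 /andP [lo hi]; apply: le_trans (expr1B_le_quadratic m p01) _.
have mp0 : 0 <= m%:R * p by case/andP: p01 => p0 _; rewrite mulr_ge0.
nra.
Qed.

Lemma expr1B_div_le (R : realFieldType) (Delta n : nat) (gamma : R) :
  (1 <= Delta)%N -> 0 < gamma <= 1 ->
  Delta%:R - gamma * Delta%:R / 2 <= n%:R ->
  (1 - gamma / Delta%:R) ^+ n <= 1 - gamma + gamma ^+ 2.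
Proof.
move=> D1 /andP [g0 g1] hn; set D : R := Delta%:R; set p := gamma / D.
have D0 : 0 < D by rewrite ltr0n.
have pD : D * p = gamma by rewrite mulrC mulfVK // gt_eqF.
have p0 : 0 <= p by rewrite divr_ge0 ?ltW.
have p1 : p <= 1 by rewrite ler_pdivrMr // mul1r (le_trans g1) // ler1n.
(* Capping the exponent at [Delta] keeps [m p <= gamma], where the quadratic bound applies. *)
set m := minn n Delta.
have mD : (m%:R : R) <= D by rewrite ler_nat geq_minr.
have mlo : D - gamma * D / 2 <= m%:R.
  have gD : 0 <= gamma * D by rewrite mulr_ge0 ?ltW.
  by rewrite /m; case: leqP => _ //; rewrite -/D; lra.
apply: (@le_trans _ _ ((1 - p) ^+ m)).
  by apply: ler_wiXn2l; rewrite ?geq_minl //; lra.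
apply: expr1B_le_of_mul_bounds; first by rewrite p0 p1.
apply/andP; split; last by rewrite -pD ler_wpM2r.
have := ler_wpM2r p0 mlo; nra.
Qed.

Lemma parameter_slack (R : rcfType) (Delta : nat) (gamma eta : R) :
  (1 <= Delta)%N -> 0 < gamma -> gamma <= 1 / 2 ->
  (Num.sqrt (Delta%:R : R))^-1 <= eta -> eta <= gamma ^+ 2 / 8 ->
  3 + 2 * eta * Delta%:R <= gamma * Delta%:R / 2.
Proof.
move=> D1 g0 g2 se eg; set D : R := Delta%:R; set s := Num.sqrt D.
have D1' : 1 <= D by rewrite ler1n.
have s1 : 1 <= s by rewrite -sqrtr1 ler_sqrt.
have sD : s * s = D by rewrite -expr2 sqr_sqrtr // ler0n.
have es : 1 <= eta * s by move: se; rewrite -[s^-1]mul1r ler_pdivrMr // (lt_le_trans ltr01).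
have gs : 16 <= gamma * s by nra.
have gD : 16 <= gamma * D by rewrite -sD; nra.
have e0 : 0 <= eta by nra.
nra.
Qed.

Lemma cond_exp_card_remaining_le (R : realFieldType) (T : finType) (e : rel T)
    (Delta : nat) (gamma : R) (S W : {set T}) :
  symmetric e -> (1 <= Delta)%N -> 0 < gamma < 1 ->
  (forall w, w \in W -> Delta%:R - gamma * Delta%:R / 2 <= #|cnbhd e w :\: S|%:R) ->
  cond_exp (gamma / Delta%:R) (fun A => A :&: S == set0)
    (fun A => #|W :&: remaining e A|%:R)
  <= (1 - gamma + gamma ^+ 2) * #|W|%:R.
Proof.
move=> sym_e D1 /andP [g0 g1] farW; have D0 : 0 < (Delta%:R : R) by rewrite ltr0n.
rewrite cond_exp_card_remaining //; last first.
  by rewrite lt_eqF // ltr_pdivrMr // mul1r (lt_le_trans g1) // ler1n.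
rewrite mulr_natr -sumr_const; apply: ler_sum => w wW.
by apply: expr1B_div_le => //; [rewrite g0 ltW | exact: farW].
Qed.

Theorem lemma3p2 (R : rcfType) (T : finType) (e : rel T)
  (Delta : nat) (gamma eta : R) :
  symmetric e -> irreflexive e ->
  (1 <= Delta)%N ->
  0 < gamma -> gamma <= 1 / 2 ->
  (Num.sqrt (Delta%:R : R))^-1 <= eta -> eta <= gamma ^+ 2 / 8 ->
  (forall v : T, #|nbhd e v| = Delta.-1 \/ #|nbhd e v| = Delta) ->
  (forall u v : T, u != v -> (#|nbhd e u :&: nbhd e v|%:R : R) <= eta * Delta%:R) ->
  let p := gamma / Delta%:R in
  (forall v : T,
     cond_exp p (fun A => v \in remaining e A)
       (fun A => (deg_after e A v)%:R)
     <= (1 - gamma + gamma ^+ 2) * #|nbhd e v|%:R) /\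
  (forall u v : T, u != v ->
     cond_exp p (fun A => (u \in remaining e A) && (v \in remaining e A))
       (fun A => (codeg_after e A u v)%:R)
     <= (1 - gamma + gamma ^+ 2) * #|nbhd e u :&: nbhd e v|%:R).
Proof.
move=> sym_e irr_e D1 g0 g2 se eg deg codeg p.
have g01 : 0 < gamma < 1 by rewrite g0; lra.
have slack := parameter_slack D1 g0 g2 se eg.
have eD : 0 <= eta * Delta%:R by rewrite mulr_ge0 // (le_trans _ se) ?invr_ge0 ?sqrtr_ge0.
have codeg_cnbhd w x : e x w -> (#|nbhd e w :&: cnbhd e x|%:R : R) <= eta * Delta%:R + 1.
  move=> exw; have wx : w != x by apply: contraTneq exw => ->; rewrite irr_e.
  apply: (@le_trans _ _ (#|nbhd e w :&: nbhd e x| + 1)%:R).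
    by rewrite ler_nat card_nbhdI_cnbhd.
  by rewrite natrD lerD2r codeg.
have many_outside w S : (#|nbhd e w :&: S|%:R : R) <= 2 * eta * Delta%:R + 2 ->
    Delta%:R - gamma * Delta%:R / 2 <= #|cnbhd e w :\: S|%:R.
  have : (Delta%:R : R) <= #|nbhd e w|%:R + 1 by rewrite natr1 ler_nat; case: (deg w) => ->; lia.
  have := card_nbhd_le e S w; rewrite -(ler_nat R) natrD; lra.
split=> [v | u v uv].
  rewrite (eq_cond_exp _ _ (fun A => in_remaining sym_e A v)).
  apply: cond_exp_card_remaining_le => // w; rewrite inE => evw.
  by apply: many_outside; have := codeg_cnbhd w v evw; lra.
have avoid_uv A : (u \in remaining e A) && (v \in remaining e A)
                  = (A :&: (cnbhd e u :|: cnbhd e v) == set0).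
  by rewrite !in_remaining // setIUr setU_eq0.
rewrite (eq_cond_exp _ _ avoid_uv); apply: cond_exp_card_remaining_le => // w.
rewrite !inE => /andP [euw evw]; apply: many_outside.
apply: (@le_trans _ _ (#|nbhd e w :&: cnbhd e u| + #|nbhd e w :&: cnbhd e v|)%:R).
  by rewrite ler_nat setIUr leq_card_setU.
by rewrite natrD; have := codeg_cnbhd w u euw; have := codeg_cnbhd w v evw; lra.
Qed.
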